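(* Let $q$ be a prime power, $h\geq 2$, let $f,g:\mathbb{F}_{q^h}\to\mathbb{F}_q$ be nonzero $\mathbb{F}_q$-linear functionals and $\alpha\in\mathbb{F}_{q^h}\setminus\mathbb{F}_q$. Define the point sets of $\mathrm{PG}(2,q^h)$ $\mathcal{L}=\{(x:f(x):y): x\in\mathbb{F}_{q^h},\ y\in\mathbb{F}_q,\ (x,y)\neq(0,0)\}$ and $\mathcal{L}'=\{(y':x':g(x')+y'\alpha): x'\in\mathbb{F}_{q^h},\ y'\in\mathbb{F}_q,\ (x',y')\neq(0,0)\}$. Suppose that (1) $g(1)=g(\alpha)=1$; (2) $f(1/\alpha)\neq 0$; (3) $f\left(\frac{k-1}{k(k-1)\alpha-k^2}\right)\neq 1$ for all $k\in\mathbb{F}_q\setminus\{0,1\}$. Then $\mathcal{L}$ and $\mathcal{L}'$ are disjoint.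
   Context: Points of $\mathrm{PG}(2,q^h)$ are written in homogeneous coordinates $(a:b:c)$. *)

From HB Require Import structures.
From mathcomp Require Import all_boot all_order all_algebra all_field.
Set Implicit Arguments. Unset Strict Implicit. Unset Printing Implicit Defensive.
Import GRing.Theory.
Local Open Scope ring_scope.

(* Homogeneous coordinates of PG(2,F): nonzero triples; two triples represent
   the same point iff they are proportional by a nonzero scalar. *)
Definition pg_same (F : fieldType) (u v : F * F * F) : Prop :=
  exists2 c : F, c != 0 & u = (c * v.1.1, c * v.1.2, c * v.2).

(* Ambient: K = F_q (finite field), L = F_{q^h} an extension of degree h over K.
   Elements of F_q inside L are  y%:A. *)

Definition in_setL (K : finFieldType) (L : fieldExtType K)
  (f : {linear L -> K^o}) (u : L * L * L) : Prop :=
  exists (x : L) (y : K), (x, y) != (0, 0) /\ u = (x, (f x)%:A, y%:A).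

Definition in_setL' (K : finFieldType) (L : fieldExtType K)
  (g : {linear L -> K^o}) (alpha : L) (u : L * L * L) : Prop :=
  exists (x' : L) (y' : K), (x', y') != (0, 0) /\
    u = (y'%:A, x', (g x')%:A + y'%:A * alpha).

(* Suppose (x : f x : y) = c (y' : x' : t + y' alpha) with t = g x'.  Then
   y' <> 0, and D := t + y' alpha <> 0 because alpha is not in F_q.  Comparing
   coordinates and applying g (which takes the value 1 at 1 and at alpha) and f
   gives t = y' (t + y') f(1/D).  For t = 0 this contradicts f(1/alpha) <> 0;
   otherwise k := t / (t + y') lies outside {0, 1} and
   (k - 1) / (k (k - 1) alpha - k^2) = (t + y') y' / (t D), whose image under f
   is 1, against condition (3). *)

From HB Require Import structures.
From mathcomp Require Import all_boot all_order all_algebra all_field.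
From mathcomp Require Import ring.
Set Implicit Arguments. Unset Strict Implicit. Unset Printing Implicit Defensive.
Import GRing.Theory.
Local Open Scope ring_scope.

Lemma quotient_ratioE (F : fieldType) (t y a : F) :
    t != 0 -> t + y != 0 -> t + y * a != 0 ->
  let k := t / (t + y) in
  (k - 1) / (k * (k - 1) * a - k ^+ 2) = (t + y) * y / t / (t + y * a).
Proof.
move=> t0 ty0 D0 k.
have den : k * (k - 1) * a - k ^+ 2 = - (t * (t + y * a) / (t + y) ^+ 2).
  by rewrite /k; field.
by rewrite den /k; field; rewrite D0 t0 ty0 oppr_eq0 mulf_neq0.
Qed.

Section LinearCombinations.

Variables (K : fieldType) (L : fieldExtType K).

Lemma alg_linear_mul (f : {linear L -> K^o}) (a : K) (w : L) :
  f (a%:A * w) = a * f w.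
Proof. by rewrite mulr_algl linearZ. Qed.

Lemma lincomb_notin1v_neq0 (alpha : L) (t y : K) :
  alpha \notin 1%VS -> y != 0 -> t%:A + y%:A * alpha != 0.
Proof.
move=> alphaNK y0; apply: contraNneq alphaNK => /eqP.
rewrite addrC addr_eq0 mulr_algl => /eqP /(canRL (scalerK y0)) ->.
by rewrite !(memvZ, memvN) // memv_line.
Qed.

Variables (f g : {linear L -> K^o}) (alpha : L).
Hypotheses (alphaNK : alpha \notin 1%VS) (g1 : g 1 = 1) (g_alpha : g alpha = 1).

Lemma common_point_lincomb_equation (x x' : L) (y y' : K) :
    (x', y') != (0, 0) ->
    pg_same (x, (f x)%:A, y%:A) (y'%:A, x', (g x')%:A + y'%:A * alpha) ->
  y' != 0 /\ g x' = y' * (g x' + y') * f ((g x')%:A + y'%:A * alpha)^-1.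
Proof.
move=> nz' [c c0 /= [Ex Ef Ey]].
have y'0 : y' != 0.
  apply: contra nz' => /eqP y'0; move: Ex Ef; rewrite y'0 scale0r mulr0 => ->.
  by rewrite linear0 scale0r => /esym/eqP; rewrite mulf_eq0 (negPf c0) => /eqP ->.
set t := g x' in Ey *; set s := f x in Ef.
set D := t%:A + y'%:A * alpha in Ey *.
have D0 : D != 0 by exact: lincomb_notin1v_neq0.
have y0 : y != 0.
  by apply: contraNneq (mulf_neq0 c0 D0) => y0; rewrite -Ey y0 scale0r.
have cE : c = y%:A / D by rewrite Ey mulfK.
have yx'E : y%:A * x' = s%:A * D by rewrite Ey Ef mulrAC.
have gD : g D = t + y'.
  by rewrite linearD /= alg_linear_mul -[t%:A]mulr1 !alg_linear_mul g1 g_alpha !mulr1.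
have gx' : y * t = s * (t + y').
  by rewrite /t -alg_linear_mul yx'E alg_linear_mul gD.
have sE : s = y * y' * f D^-1.
  by rewrite /s Ex cE mulrAC -mulrA !alg_linear_mul mulrA.
split=> //; apply: (mulfI y0).
by rewrite gx' sE; ring.
Qed.

Lemma alg_quotient_ratioE (t y : K) :
    t != 0 -> t + y != 0 -> y != 0 ->
  let k := t / (t + y) in
  (k - 1)%:A / ((k * (k - 1))%:A * alpha - (k ^+ 2)%:A)
    = ((t + y) * y / t)%:A / (t%:A + y%:A * alpha).
Proof.
move=> t0 ty0 y0 k.
have algE a : a%:A = in_alg L a by [].
have D0 : t%:A + y%:A * alpha != 0 by exact: lincomb_notin1v_neq0.
rewrite /k !algE !(rmorphM, rmorphB, rmorphD, rmorphXn, fmorphV, rmorph1) /=.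
by rewrite quotient_ratioE // algE -?rmorphD fmorph_eq0.
Qed.

Lemma lincomb_equation_unsolvable (t y : K) :
    f alpha^-1 != 0 ->
    (forall k : K, k != 0 -> k != 1 ->
       f ((k - 1)%:A / ((k * (k - 1))%:A * alpha - (k ^+ 2)%:A)) != 1) ->
    y != 0 ->
  t != y * (t + y) * f (t%:A + y%:A * alpha)^-1.
Proof.
move=> f_alphaV fk y0; have [->|t0] := eqVneq t 0.
  rewrite scale0r !add0r invfM -[y%:A]/(in_alg L y) -fmorphV alg_linear_mul.
  by rewrite eq_sym !mulf_neq0 ?invr_eq0.
apply/negP => /eqP tE.
have ty0 : t + y != 0 by apply: contraNneq t0 => ty0; rewrite tE ty0 mulr0 mul0r.
have k0 : t / (t + y) != 0 by rewrite mulf_neq0 ?invr_eq0.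
have k1 : t / (t + y) != 1.
  by apply: contraNneq y0 => /divr1_eq; rewrite -{1}[t]addr0 => /addrI <-.
move/negP: (fk _ k0 k1); apply; apply/eqP.
rewrite alg_quotient_ratioE // alg_linear_mul.
by rewrite mulrAC [(t + y) * y]mulrC -tE divff.
Qed.

End LinearCombinations.

Theorem theorem3p4 (K : finFieldType) (L : fieldExtType K)
  (f g : {linear L -> K^o}) (alpha : L) :
  (2 <= \dim {: L})%N ->
  (exists x : L, f x != 0) ->
  (exists x : L, g x != 0) ->
  alpha \notin (1%VS : {vspace L}) ->
  g 1 = 1 -> g alpha = 1 ->
  f alpha^-1 != 0 ->
  (forall k : K, k != 0 -> k != 1 ->
     f ((k - 1)%:A / ((k * (k - 1))%:A * alpha - (k ^+ 2)%:A)) != 1) ->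
  forall u v : L * L * L,
    in_setL f u -> in_setL' g alpha v -> ~ pg_same u v.
Proof.
move=> _ _ _ alphaNK g1 g_alpha f_alphaV fk u v [x [y [_ ->]]] [x' [y' [nz' ->]]].
move=> /(common_point_lincomb_equation alphaNK g1 g_alpha nz') [y'0 tE].
by move: tE; apply/eqP; exact: lincomb_equation_unsolvable.
Qed.
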